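(* Let $k$ be a field, $X$ a set, and $S\subseteq GDNP(X)$. Let $\varphi:GDNP(X)\to C(X)$ be the GDN-Poisson algebra homomorphism induced by $a\mapsto a$ ($a\in X$), where $C(X)$ is regarded as a GDN-Poisson algebra via $x\circ y=x\ast Dy$. Then the GDN-Poisson algebra $GDNP(X|S)=GDNP(X)/Id(S)$ embeds into $C(X|\varphi(S))$: the GDN-Poisson algebra homomorphism $GDNP(X|S)\to C(X|\varphi(S))$ induced by $a\mapsto a$ is injective.
   Context: A GDN-Poisson algebra is a vector space $\mathcal A$ with bilinear products $\cdot,\circ$ such that $(\mathcal A,\cdot)$ is commutative associative with unit $e$, $(\mathcal A,\circ)$ satisfies $x\circ(y\circ z)-(x\circ y)\circ z=y\circ(x\circ z)-(y\circ x)\circ z$ and $(x\circ y)\circ z=(x\circ z)\circ y$, and $(x\cdot y)\circ z=x\cdot(y\circ z)$, $(x\circ y)\cdot z-x\circ(y\cdot z)=(y\circ x)\cdot z-y\circ(x\cdot z)$. $GDNP(X)$ is the free GDN-Poisson algebra on $X$, and $Id(S)$ its ideal generated by $S$. A special GDN-Poisson admissible algebra $(\mathcal A,\cdot,\ast,D)$ is a vector space with bilinear products $\cdot,\ast$ and a linear map $D$ such that $(\mathcal A,\cdot)$ is commutative associative with unit $e$, $(\mathcal A,\ast)$ is commutative associative, and $(x\cdot y)\ast z=x\cdot(y\ast z)$, $D(x\ast y)=(Dx)\ast y+x\ast(Dy)$, $D(x\cdot y)=(Dx)\cdot y+x\cdot(Dy)-x\cdot y\cdot(De)$. $C(X)$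 denotes the free such algebra generated by $X$; for $R\subseteq C(X)$, $C(X|R)=C(X)/Id[R]$ where $Id[R]$ is the ideal of $C(X)$ (closed under $\cdot,\ast,D$) generated by $R$. With $x\circ y:=x\ast Dy$, any such algebra is a GDN-Poisson algebra. *)

From mathcomp Require Import all_boot all_algebra.
Set Implicit Arguments. Unset Strict Implicit. Unset Printing Implicit Defensive.
Import GRing.Theory.
Local Open Scope ring_scope.

Section GDN.
Variables (k : fieldType) (X : Type).

Inductive gterm : Type :=
| gvar of X
| gunit
| gzero
| gadd of gterm & gterm
| gscale of k & gterm
| gdot of gterm & gterm
| gcirc of gterm & gterm.

Definition gsub (t u : gterm) := gadd t (gscale (-1) u).

(* congruence on gterm generated by the GDN-Poisson identities and by s ~ 0
   for s in S; the class of 0 is the ideal Id(S) of GDNP(X), and the quotient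
   is GDNP(X|S) = GDNP(X)/Id(S). *)
Inductive gdn_cong (S : gterm -> Prop) : gterm -> gterm -> Prop :=
| geq_refl t : gdn_cong S t t
| geq_sym t u : gdn_cong S t u -> gdn_cong S u t
| geq_trans t u v : gdn_cong S t u -> gdn_cong S u v -> gdn_cong S t v
| geq_add t t' u u' : gdn_cong S t t' -> gdn_cong S u u' -> gdn_cong S (gadd t u) (gadd t' u')
| geq_scale c t t' : gdn_cong S t t' -> gdn_cong S (gscale c t) (gscale c t')
| geq_dot t t' u u' : gdn_cong S t t' -> gdn_cong S u u' -> gdn_cong S (gdot t u) (gdot t' u')
| geq_circ t t' u u' : gdn_cong S t t' -> gdn_cong S u u' -> gdn_cong S (gcirc t u) (gcirc t' u')
| geq_addA t u v : gdn_cong S (gadd (gadd t u) v) (gadd t (gadd u v))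
| geq_addC t u : gdn_cong S (gadd t u) (gadd u t)
| geq_add0 t : gdn_cong S (gadd t gzero) t
| geq_scale1 t : gdn_cong S (gscale 1 t) t
| geq_scale0 t : gdn_cong S (gscale 0 t) gzero
| geq_scaleA a b t : gdn_cong S (gscale (a * b) t) (gscale a (gscale b t))
| geq_scaleDl a b t : gdn_cong S (gscale (a + b) t) (gadd (gscale a t) (gscale b t))
| geq_scaleDr a t u : gdn_cong S (gscale a (gadd t u)) (gadd (gscale a t) (gscale a u))
| geq_dotDl t u v : gdn_cong S (gdot (gadd t u) v) (gadd (gdot t v) (gdot u v))
| geq_dotDr t u v : gdn_cong S (gdot t (gadd u v)) (gadd (gdot t u) (gdot t v))
| geq_dotZl a t u : gdn_cong S (gdot (gscale a t) u) (gscale a (gdot t u))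
| geq_dotZr a t u : gdn_cong S (gdot t (gscale a u)) (gscale a (gdot t u))
| geq_circDl t u v : gdn_cong S (gcirc (gadd t u) v) (gadd (gcirc t v) (gcirc u v))
| geq_circDr t u v : gdn_cong S (gcirc t (gadd u v)) (gadd (gcirc t u) (gcirc t v))
| geq_circZl a t u : gdn_cong S (gcirc (gscale a t) u) (gscale a (gcirc t u))
| geq_circZr a t u : gdn_cong S (gcirc t (gscale a u)) (gscale a (gcirc t u))
| geq_dotC t u : gdn_cong S (gdot t u) (gdot u t)
| geq_dotA t u v : gdn_cong S (gdot (gdot t u) v) (gdot t (gdot u v))
| geq_dot1 t : gdn_cong S (gdot gunit t) t
| geq_lsym x y z :
    gdn_cong S (gsub (gcirc x (gcirc y z)) (gcirc (gcirc x y) z))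
          (gsub (gcirc y (gcirc x z)) (gcirc (gcirc y x) z))
| geq_rcom x y z : gdn_cong S (gcirc (gcirc x y) z) (gcirc (gcirc x z) y)
| geq_comp1 x y z : gdn_cong S (gcirc (gdot x y) z) (gdot x (gcirc y z))
| geq_comp2 x y z :
    gdn_cong S (gsub (gdot (gcirc x y) z) (gcirc x (gdot y z)))
          (gsub (gdot (gcirc y x) z) (gcirc y (gdot x z)))
| geq_rel s : S s -> gdn_cong S s gzero.

Inductive cterm : Type :=
| cvar of X
| cunit
| czero
| cadd of cterm & cterm
| cscale of k & cterm
| cdot of cterm & cterm
| cstar of cterm & cterm
| cD of cterm.

Definition csub (t u : cterm) := cadd t (cscale (-1) u).

(* congruence on cterm (compatible with ., *, D and linear structure) generated
   by the identities of special GDN-Poisson admissible algebras and r ~ 0 for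
   r in R; the class of 0 is Id[R], the quotient is C(X|R). *)
Inductive spc_cong (R : cterm -> Prop) : cterm -> cterm -> Prop :=
| ceq_refl t : spc_cong R t t
| ceq_sym t u : spc_cong R t u -> spc_cong R u t
| ceq_trans t u v : spc_cong R t u -> spc_cong R u v -> spc_cong R t v
| ceq_add t t' u u' : spc_cong R t t' -> spc_cong R u u' -> spc_cong R (cadd t u) (cadd t' u')
| ceq_scale c t t' : spc_cong R t t' -> spc_cong R (cscale c t) (cscale c t')
| ceq_dot t t' u u' : spc_cong R t t' -> spc_cong R u u' -> spc_cong R (cdot t u) (cdot t' u')
| ceq_star t t' u u' : spc_cong R t t' -> spc_cong R u u' -> spc_cong R (cstar t u) (cstar t' u')
| ceq_D t t' : spc_cong R t t' -> spc_cong R (cD t) (cD t')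
| ceq_addA t u v : spc_cong R (cadd (cadd t u) v) (cadd t (cadd u v))
| ceq_addC t u : spc_cong R (cadd t u) (cadd u t)
| ceq_add0 t : spc_cong R (cadd t czero) t
| ceq_scale1 t : spc_cong R (cscale 1 t) t
| ceq_scale0 t : spc_cong R (cscale 0 t) czero
| ceq_scaleA a b t : spc_cong R (cscale (a * b) t) (cscale a (cscale b t))
| ceq_scaleDl a b t : spc_cong R (cscale (a + b) t) (cadd (cscale a t) (cscale b t))
| ceq_scaleDr a t u : spc_cong R (cscale a (cadd t u)) (cadd (cscale a t) (cscale a u))
| ceq_dotDl t u v : spc_cong R (cdot (cadd t u) v) (cadd (cdot t v) (cdot u v))
| ceq_dotDr t u v : spc_cong R (cdot t (cadd u v)) (cadd (cdot t u) (cdot t v))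
| ceq_dotZl a t u : spc_cong R (cdot (cscale a t) u) (cscale a (cdot t u))
| ceq_dotZr a t u : spc_cong R (cdot t (cscale a u)) (cscale a (cdot t u))
| ceq_starDl t u v : spc_cong R (cstar (cadd t u) v) (cadd (cstar t v) (cstar u v))
| ceq_starDr t u v : spc_cong R (cstar t (cadd u v)) (cadd (cstar t u) (cstar t v))
| ceq_starZl a t u : spc_cong R (cstar (cscale a t) u) (cscale a (cstar t u))
| ceq_starZr a t u : spc_cong R (cstar t (cscale a u)) (cscale a (cstar t u))
| ceq_DD t u : spc_cong R (cD (cadd t u)) (cadd (cD t) (cD u))
| ceq_DZ a t : spc_cong R (cD (cscale a t)) (cscale a (cD t))
| ceq_dotC t u : spc_cong R (cdot t u) (cdot u t)
| ceq_dotA t u v : spc_cong R (cdot (cdot t u) v) (cdot t (cdot u v))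
| ceq_dot1 t : spc_cong R (cdot cunit t) t
| ceq_starC t u : spc_cong R (cstar t u) (cstar u t)
| ceq_starA t u v : spc_cong R (cstar (cstar t u) v) (cstar t (cstar u v))
| ceq_comp x y z : spc_cong R (cstar (cdot x y) z) (cdot x (cstar y z))
| ceq_Dstar x y : spc_cong R (cD (cstar x y)) (cadd (cstar (cD x) y) (cstar x (cD y)))
| ceq_Ddot x y :
    spc_cong R (cD (cdot x y))
          (csub (cadd (cdot (cD x) y) (cdot x (cD y))) (cdot (cdot x y) (cD cunit)))
| ceq_rel r : R r -> spc_cong R r czero.


Fixpoint phiGC (t : gterm) : cterm :=
  match t with
  | gvar a => cvar a
  | gunit => cunit
  | gzero => czero
  | gadd t u => cadd (phiGC t) (phiGC u)
  | gscale c t => cscale c (phiGC t)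
  | gdot t u => cdot (phiGC t) (phiGC u)
  | gcirc t u => cstar (phiGC t) (cD (phiGC u))
  end.

Definition phi_img (S : gterm -> Prop) : cterm -> Prop :=
  fun c => exists2 s, S s & c = phiGC s.

End GDN.

From HB Require Import structures.
From mathcomp Require Import all_boot all_algebra.
From mathcomp Require Import boolp ring.
Set Implicit Arguments. Unset Strict Implicit. Unset Printing Implicit Defensive.
Import GRing.Theory.
Local Open Scope ring_scope.

(* In a GDN-Poisson algebra A with unit e the first compatibility gives
   x o y = x . (e o y), and the second one shows that d y := e o y - y . (e o e)
   is a derivation of (A, .); hence x o y = x . (d y + y . (e o e)).  So A sits
   inside the Laurent algebra A[t, t^-1] with x * y := t x y and
   D (x t^m) := (d x + (m + 1) x (e o e)) t^(m - 1), a special GDN-Poisson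
   admissible algebra in which x * D y = x o y for x, y in A = A t^0.
   For A = GDNP(X|S), evaluating C(X) in A[t, t^-1] kills phi(S), hence factors
   through C(X|phi(S)), and its composite with phi is the projection
   GDNP(X) -> GDNP(X|S). *)

Section GDNDerivation.
Variables (A : comPzRingType) (circ : A -> A -> A).
Hypothesis circDr : forall x, {morph circ x : y z / y + z}.
Hypothesis circ_mull : forall x y z, circ (x * y) z = x * circ y z.
Hypothesis circ_exchange : forall x y z,
  circ x y * z - circ x (y * z) = circ y x * z - circ y (x * z).

Definition gdn_der y := circ 1 y - y * circ 1 1.

Lemma circ_factor x y : circ x y = x * circ 1 y.
Proof. by rewrite -circ_mull mulr1. Qed.

Lemma circE x y : circ x y = x * (gdn_der y + y * circ 1 1).
Proof. rewrite circ_factor /gdn_der; ring. Qed.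

Lemma gdn_derD : {morph gdn_der : y z / y + z}.
Proof. move=> y z; rewrite /gdn_der circDr; ring. Qed.

Lemma gdn_derM x y : gdn_der (x * y) = gdn_der x * y + x * gdn_der y.
Proof.
have := circ_exchange 1 x y.
rewrite mul1r (circ_factor x 1) (circ_factor x y) /gdn_der => exchange.
have -> : circ 1 (x * y) = circ 1 x * y - x * circ 1 1 * y + x * circ 1 y.
  rewrite -[LHS](subKr (circ 1 x * y)) exchange; ring.
ring.
Qed.

End GDNDerivation.

Section LaurentModel.
Variables (A : comPzRingType) (der : A -> A) (a0 : A).
Hypothesis derD : {morph der : x y / x + y}.
Hypothesis derM : forall x y, der (x * y) = der x * y + x * der y.

Definition laurent := seq (int * A).

Definition lsum (F : int -> A -> A) (l : laurent) := \sum_(p <- l) F p.1 p.2.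

Definition additive_family (F : int -> A -> A) := forall m, {morph F m : x y / x + y}.

(* A sequence of pairs (m, x) stands for the Laurent polynomial sum x t^m; two
   sequences denote the same polynomial iff every additive family indexed by the
   exponents gives the same sum (compare coefficients with F m x := [m == m0] x). *)
Definition laurent_eq (l l' : laurent) :=
  forall F, additive_family F -> lsum F l = lsum F l'.

Definition lscale a (l : laurent) : laurent := [seq (p.1, a * p.2) | p <- l].
Definition lmul (l1 l2 : laurent) : laurent :=
  [seq (p.1 + q.1, p.2 * q.2) | p <- l1, q <- l2].
Definition lstar (l1 l2 : laurent) : laurent :=
  [seq (p.1 + q.1 + 1, p.2 * q.2) | p <- l1, q <- l2].
Definition lder (l : laurent) : laurent :=
  [seq (p.1 - 1, der p.2 + (p.1 + 1)%:~R * (p.2 * a0)) | p <- l].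

Lemma additive_family0 F m : additive_family F -> F m 0 = 0.
Proof. by move=> hF; apply: (addrI (F m 0)); rewrite -hF !addr0. Qed.

Lemma additive_family_split F m m1 m2 x x1 x2 : additive_family F ->
  m1 = m -> m2 = m -> x = x1 + x2 -> F m x = F m1 x1 + F m2 x2.
Proof. by move=> hF -> -> ->; rewrite hF. Qed.

Lemma lsum_cat F l1 l2 : lsum F (l1 ++ l2) = lsum F l1 + lsum F l2.
Proof. exact: big_cat. Qed.

Section BigLaurent.
Variable G : int * A -> A.

Lemma big_lscale a l : \sum_(r <- lscale a l) G r = \sum_(p <- l) G (p.1, a * p.2).
Proof. exact: big_map. Qed.

Lemma big_lmul l1 l2 :
  \sum_(r <- lmul l1 l2) G r = \sum_(p <- l1) \sum_(q <- l2) G (p.1 + q.1, p.2 * q.2).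
Proof. exact: big_allpairs_dep. Qed.

Lemma big_lstar l1 l2 :
  \sum_(r <- lstar l1 l2) G r = \sum_(p <- l1) \sum_(q <- l2) G (p.1 + q.1 + 1, p.2 * q.2).
Proof. exact: big_allpairs_dep. Qed.

Lemma big_lder l :
  \sum_(r <- lder l) G r = \sum_(p <- l) G (p.1 - 1, der p.2 + (p.1 + 1)%:~R * (p.2 * a0)).
Proof. exact: big_map. Qed.

End BigLaurent.

Lemma laurent_eq_refl l : laurent_eq l l. Proof. by []. Qed.
Lemma laurent_eq_sym l l' : laurent_eq l l' -> laurent_eq l' l.
Proof. by move=> h F hF; rewrite h. Qed.
Lemma laurent_eq_trans l1 l2 l3 :
  laurent_eq l1 l2 -> laurent_eq l2 l3 -> laurent_eq l1 l3.
Proof. by move=> h1 h2 F hF; rewrite h1 ?h2. Qed.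

Lemma laurent_eq_cat l1 l1' l2 l2' :
  laurent_eq l1 l1' -> laurent_eq l2 l2' -> laurent_eq (l1 ++ l2) (l1' ++ l2').
Proof. by move=> h1 h2 F hF; rewrite !lsum_cat h1 ?h2. Qed.

Lemma laurent_eq_scale a l l' : laurent_eq l l' -> laurent_eq (lscale a l) (lscale a l').
Proof.
move=> h F hF; rewrite /lsum !big_lscale.
by apply: (h (fun m x => F m (a * x))) => m x y; rewrite mulrDr hF.
Qed.

Lemma laurent_eq_der l l' : laurent_eq l l' -> laurent_eq (lder l) (lder l').
Proof.
move=> h F hF; rewrite /lsum !big_lder.
apply: (h (fun m x => F (m - 1) (der x + (m + 1)%:~R * (x * a0)))) => m x y.
by rewrite -hF derD; congr (F _ _); ring.
Qed.

Lemma laurent_eq_mul l1 l1' l2 l2' :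
  laurent_eq l1 l1' -> laurent_eq l2 l2' -> laurent_eq (lmul l1 l2) (lmul l1' l2').
Proof.
move=> h1 h2 F hF; rewrite /lsum !big_lmul.
transitivity (\sum_(p <- l1') \sum_(q <- l2) F (p.1 + q.1) (p.2 * q.2)).
  apply: (h1 (fun m x => \sum_(q <- l2) F (m + q.1) (x * q.2))) => m x y.
  by rewrite -big_split; apply: eq_bigr => q _; rewrite mulrDl hF.
rewrite exchange_big [RHS]exchange_big.
apply: (h2 (fun m z => \sum_(p <- l1') F (p.1 + m) (p.2 * z))) => m x y.
by rewrite -big_split; apply: eq_bigr => p _; rewrite mulrDr hF.
Qed.

Lemma laurent_eq_star l1 l1' l2 l2' :
  laurent_eq l1 l1' -> laurent_eq l2 l2' -> laurent_eq (lstar l1 l2) (lstar l1' l2').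
Proof.
move=> h1 h2 F hF; rewrite /lsum !big_lstar.
transitivity (\sum_(p <- l1') \sum_(q <- l2) F (p.1 + q.1 + 1) (p.2 * q.2)).
  apply: (h1 (fun m x => \sum_(q <- l2) F (m + q.1 + 1) (x * q.2))) => m x y.
  by rewrite -big_split; apply: eq_bigr => q _; rewrite mulrDl hF.
rewrite exchange_big [RHS]exchange_big.
apply: (h2 (fun m z => \sum_(p <- l1') F (p.1 + m + 1) (p.2 * z))) => m x y.
by rewrite -big_split; apply: eq_bigr => p _; rewrite mulrDr hF.
Qed.

Lemma laurent_eq_mono0 m : laurent_eq [:: (m, 0)] [::].
Proof. by move=> F hF; rewrite /lsum big_seq1 big_nil additive_family0. Qed.

Lemma laurent_eq_monoD m x y : laurent_eq [:: (m, x); (m, y)] [:: (m, x + y)].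
Proof. by move=> F hF; rewrite /lsum big_cons !big_seq1 hF. Qed.

Lemma laurent_eq_mono_inj m x y : laurent_eq [:: (m, x)] [:: (m, y)] -> x = y.
Proof.
by move/(_ (fun _ x => x) (fun _ _ _ => erefl)); rewrite /lsum !big_seq1.
Qed.

Lemma laurent_eq_addC l1 l2 : laurent_eq (l1 ++ l2) (l2 ++ l1).
Proof. by move=> F hF; rewrite !lsum_cat addrC. Qed.

Lemma lscale1 l : laurent_eq (lscale 1 l) l.
Proof. by move=> F hF; rewrite /lsum big_lscale; apply: eq_bigr => p _; rewrite mul1r. Qed.

Lemma lscale0 l : laurent_eq (lscale 0 l) [::].
Proof.
move=> F hF; rewrite /lsum big_lscale big_nil big1 // => p _.
by rewrite mul0r additive_family0.
Qed.

Lemma lscaleA a b l : laurent_eq (lscale (a * b) l) (lscale a (lscale b l)).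
Proof. by move=> F hF; rewrite /lsum !big_lscale; apply: eq_bigr => p _; rewrite mulrA. Qed.

Lemma lscaleDl a b l : laurent_eq (lscale (a + b) l) (lscale a l ++ lscale b l).
Proof.
move=> F hF; rewrite lsum_cat /lsum !big_lscale -big_split.
by apply: eq_bigr => p _; rewrite mulrDl hF.
Qed.

Lemma lscale_cat a l1 l2 : lscale a (l1 ++ l2) = lscale a l1 ++ lscale a l2.
Proof. exact: map_cat. Qed.

Lemma lder_cat l1 l2 : lder (l1 ++ l2) = lder l1 ++ lder l2.
Proof. exact: map_cat. Qed.

Lemma lmul_catl l1 l2 l3 : laurent_eq (lmul (l1 ++ l2) l3) (lmul l1 l3 ++ lmul l2 l3).
Proof. by move=> F hF; rewrite lsum_cat /lsum !big_lmul big_cat. Qed.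

Lemma lmul_catr l1 l2 l3 : laurent_eq (lmul l1 (l2 ++ l3)) (lmul l1 l2 ++ lmul l1 l3).
Proof.
move=> F hF; rewrite lsum_cat /lsum !big_lmul -big_split.
by apply: eq_bigr => p _; rewrite big_cat.
Qed.

Lemma lstar_catl l1 l2 l3 : laurent_eq (lstar (l1 ++ l2) l3) (lstar l1 l3 ++ lstar l2 l3).
Proof. by move=> F hF; rewrite lsum_cat /lsum !big_lstar big_cat. Qed.

Lemma lstar_catr l1 l2 l3 : laurent_eq (lstar l1 (l2 ++ l3)) (lstar l1 l2 ++ lstar l1 l3).
Proof.
move=> F hF; rewrite lsum_cat /lsum !big_lstar -big_split.
by apply: eq_bigr => p _; rewrite big_cat.
Qed.

Lemma lmulZl a l1 l2 : laurent_eq (lmul (lscale a l1) l2) (lscale a (lmul l1 l2)).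
Proof.
move=> F hF; rewrite /lsum big_lmul !big_lscale big_lmul.
by apply: eq_bigr => p _; apply: eq_bigr => q _; rewrite mulrA.
Qed.

Lemma lmulZr a l1 l2 : laurent_eq (lmul l1 (lscale a l2)) (lscale a (lmul l1 l2)).
Proof.
move=> F hF; rewrite /lsum big_lmul big_lscale big_lmul.
by apply: eq_bigr => p _; rewrite big_lscale; apply: eq_bigr => q _; rewrite mulrCA.
Qed.

Lemma lstarZl a l1 l2 : laurent_eq (lstar (lscale a l1) l2) (lscale a (lstar l1 l2)).
Proof.
move=> F hF; rewrite /lsum big_lstar !big_lscale big_lstar.
by apply: eq_bigr => p _; apply: eq_bigr => q _; rewrite mulrA.
Qed.

Lemma lstarZr a l1 l2 : laurent_eq (lstar l1 (lscale a l2)) (lscale a (lstar l1 l2)).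
Proof.
move=> F hF; rewrite /lsum big_lstar big_lscale big_lstar.
by apply: eq_bigr => p _; rewrite big_lscale; apply: eq_bigr => q _; rewrite mulrCA.
Qed.

Lemma lderZ a l : der a = 0 -> laurent_eq (lder (lscale a l)) (lscale a (lder l)).
Proof.
move=> der_a F hF; rewrite /lsum big_lder !big_lscale big_lder.
by apply: eq_bigr => p _; rewrite /= derM der_a; congr (F _ _); ring.
Qed.

Lemma lmulC l1 l2 : laurent_eq (lmul l1 l2) (lmul l2 l1).
Proof.
move=> F hF; rewrite /lsum !big_lmul exchange_big.
by apply: eq_bigr => p _; apply: eq_bigr => q _; rewrite addrC mulrC.
Qed.

Lemma lstarC l1 l2 : laurent_eq (lstar l1 l2) (lstar l2 l1).
Proof.
move=> F hF; rewrite /lsum !big_lstar exchange_big.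
by apply: eq_bigr => p _; apply: eq_bigr => q _; rewrite (addrC p.1) mulrC.
Qed.

Lemma lmulA l1 l2 l3 : laurent_eq (lmul (lmul l1 l2) l3) (lmul l1 (lmul l2 l3)).
Proof.
move=> F hF; rewrite /lsum !big_lmul.
apply: eq_bigr => p _; rewrite big_lmul.
by apply: eq_bigr => q _; apply: eq_bigr => r _; rewrite addrA mulrA.
Qed.

Lemma lstarA l1 l2 l3 : laurent_eq (lstar (lstar l1 l2) l3) (lstar l1 (lstar l2 l3)).
Proof.
move=> F hF; rewrite /lsum !big_lstar.
apply: eq_bigr => p _; rewrite big_lstar.
apply: eq_bigr => q _; apply: eq_bigr => r _ /=.
by rewrite mulrA; congr (F _ _); ring.
Qed.

Lemma lmul1l l : laurent_eq (lmul [:: (0, 1)] l) l.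
Proof.
move=> F hF; rewrite /lsum big_lmul big_seq1.
by apply: eq_bigr => q _; rewrite add0r mul1r.
Qed.

Lemma lstar_mull l1 l2 l3 : laurent_eq (lstar (lmul l1 l2) l3) (lmul l1 (lstar l2 l3)).
Proof.
move=> F hF; rewrite /lsum big_lstar !big_lmul.
apply: eq_bigr => p _; rewrite big_lstar.
apply: eq_bigr => q _; apply: eq_bigr => r _ /=.
by rewrite mulrA; congr (F _ _); ring.
Qed.

Lemma lder_star l1 l2 :
  laurent_eq (lder (lstar l1 l2)) (lstar (lder l1) l2 ++ lstar l1 (lder l2)).
Proof.
move=> F hF; rewrite lsum_cat /lsum big_lder !big_lstar big_lder -big_split.
apply: eq_bigr => p _; rewrite big_lder -big_split.
by apply: eq_bigr => q _ /=; apply: additive_family_split => //; rewrite ?derM; ring.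
Qed.

Lemma der1 : der 1 = 0.
Proof.
have := derM 1 1; rewrite !mulr1 mul1r => der11.
by apply: (addrI (der 1)); rewrite addr0 -der11.
Qed.

Lemma lder_mul l1 l2 :
  laurent_eq (lder (lmul l1 l2))
    ((lmul (lder l1) l2 ++ lmul l1 (lder l2)) ++
      lscale (-1) (lmul (lmul l1 l2) (lder [:: (0, 1)]))).
Proof.
have -> : lder [:: (0, 1)] = [:: (-1, a0)].
  by rewrite /lder /= der1; congr [:: (_, _)]; ring.
move=> F hF; rewrite !lsum_cat /lsum big_lder big_lscale !big_lmul big_lder.
rewrite -!big_split; apply: eq_bigr => p _.
rewrite big_lder -!big_split; apply: eq_bigr => q _.
rewrite big_seq1 /= [p.1 - 1 + _]addrAC [p.1 + (q.1 - 1)]addrA -!hF derM.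
by congr (F _ _); ring.
Qed.

Variables (k : fieldType) (X : Type) (const : {rmorphism k -> A}) (val : X -> A).
Hypothesis der_const : forall c, der (const c) = 0.

Fixpoint leval (t : cterm k X) : laurent :=
  match t with
  | cvar a => [:: (0, val a)]
  | cunit => [:: (0, 1)]
  | czero => [::]
  | cadd t u => leval t ++ leval u
  | cscale c t => lscale (const c) (leval t)
  | cdot t u => lmul (leval t) (leval u)
  | cstar t u => lstar (leval t) (leval u)
  | cD t => lder (leval t)
  end.

Lemma leval_cong R t u : (forall r, R r -> laurent_eq (leval r) [::]) ->
  spc_cong R t u -> laurent_eq (leval t) (leval u).
Proof.
move=> leval_R; elim=> /=.
- by move=> *; apply: laurent_eq_refl.
- by move=> *; apply: laurent_eq_sym.
- by move=> ? ? ? _ h1 _ h2; apply: laurent_eq_trans h1 h2.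
- by move=> ? ? ? ? _ h1 _ h2; apply: laurent_eq_cat h1 h2.
- by move=> ? ? ? _ h; apply: laurent_eq_scale h.
- by move=> ? ? ? ? _ h1 _ h2; apply: laurent_eq_mul h1 h2.
- by move=> ? ? ? ? _ h1 _ h2; apply: laurent_eq_star h1 h2.
- by move=> ? ? _ h; apply: laurent_eq_der h.
- by move=> *; rewrite catA; apply: laurent_eq_refl.
- by move=> *; apply: laurent_eq_addC.
- by move=> *; rewrite cats0; apply: laurent_eq_refl.
- by move=> *; rewrite rmorph1; apply: lscale1.
- by move=> *; rewrite rmorph0; apply: lscale0.
- by move=> *; rewrite rmorphM; apply: lscaleA.
- by move=> *; rewrite rmorphD; apply: lscaleDl.
- by move=> *; rewrite lscale_cat; apply: laurent_eq_refl.
- by move=> *; apply: lmul_catl.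
- by move=> *; apply: lmul_catr.
- by move=> *; apply: lmulZl.
- by move=> *; apply: lmulZr.
- by move=> *; apply: lstar_catl.
- by move=> *; apply: lstar_catr.
- by move=> *; apply: lstarZl.
- by move=> *; apply: lstarZr.
- by move=> *; rewrite lder_cat; apply: laurent_eq_refl.
- by move=> *; apply: lderZ.
- by move=> *; apply: lmulC.
- by move=> *; apply: lmulA.
- by move=> *; apply: lmul1l.
- by move=> *; apply: lstarC.
- by move=> *; apply: lstarA.
- by move=> *; apply: lstar_mull.
- by move=> *; apply: lder_star.
- by move=> *; rewrite rmorphN1; apply: lder_mul.
- exact: leval_R.
Qed.

End LaurentModel.

Section Quotient.
Variables (k : fieldType) (X : Type) (S : gterm k X -> Prop).
Local Notation gterm := (gterm k X).
Local Notation "t ~ u" := (gdn_cong S t u) (at level 70).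

(* The congruence is not decidable, so a class is represented by the predicate
   gdn_cong S t itself, and equality of classes uses extensionality. *)
Definition gquot := {P : gterm -> Prop | exists t, P = gdn_cong S t}.

Definition gclass t : gquot := exist _ (gdn_cong S t) (ex_intro _ t erefl).

Definition grepr (a : gquot) : gterm := projT1 (cid (proj2_sig a)).

Lemma eq_gclass t u : t ~ u -> gclass t = gclass u.
Proof.
move=> tu; apply: eq_exist_uncurried.
have e : gdn_cong S t = gdn_cong S u.
  apply/funext => v; apply/propext; split => [tv | uv].
    exact: geq_trans (geq_sym tu) tv.
  exact: geq_trans tu uv.
by exists e; apply: Prop_irrelevance.
Qed.

Lemma gclass_inj t u : gclass t = gclass u -> t ~ u.
Proof. by move=> /(congr1 sval) /= ->; apply: geq_refl. Qed.

Lemma greprK a : gclass (grepr a) = a.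
Proof.
case: a => P hP; rewrite /grepr /=; case: (cid hP) => t e /=; subst P.
by apply: eq_exist_uncurried; exists erefl; apply: Prop_irrelevance.
Qed.

Lemma gquot_ind (P : gquot -> Prop) : (forall t, P (gclass t)) -> forall a, P a.
Proof. by move=> hP a; rewrite -(greprK a). Qed.

Lemma grepr_class t : grepr (gclass t) ~ t.
Proof. by apply: gclass_inj; rewrite greprK. Qed.

(* Locked, so that rewriting with one of the equations qaddE, qmulE, ... below
   cannot unfold the other operations into classes. *)
Fact gquot_lift_key : unit. Proof. by []. Qed.
Definition gquot_lift1 := locked_with gquot_lift_key
  (fun (f : gterm -> gterm) (a : gquot) => gclass (f (grepr a))).
Canonical gquot_lift1_unlockable := [unlockable fun gquot_lift1].
Definition gquot_lift2 := locked_with gquot_lift_key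
  (fun (f : gterm -> gterm -> gterm) (a b : gquot) => gclass (f (grepr a) (grepr b))).
Canonical gquot_lift2_unlockable := [unlockable fun gquot_lift2].

Lemma gquot_lift1E f t : (forall t t', t ~ t' -> f t ~ f t') ->
  gquot_lift1 f (gclass t) = gclass (f t).
Proof. by move=> f_cong; rewrite unlock; apply/eq_gclass/f_cong/grepr_class. Qed.

Lemma gquot_lift2E f t u : (forall t t' u u', t ~ t' -> u ~ u' -> f t u ~ f t' u') ->
  gquot_lift2 f (gclass t) (gclass u) = gclass (f t u).
Proof. by move=> f_cong; rewrite unlock; apply/eq_gclass/f_cong; apply: grepr_class. Qed.

Definition qadd := gquot_lift2 (@gadd k X).
Definition qscale c := gquot_lift1 (gscale c).
Definition qmul := gquot_lift2 (@gdot k X).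
Definition qcirc := gquot_lift2 (@gcirc k X).

Lemma qaddE t u : qadd (gclass t) (gclass u) = gclass (gadd t u).
Proof. exact/gquot_lift2E/geq_add. Qed.
Lemma qscaleE c t : qscale c (gclass t) = gclass (gscale c t).
Proof. exact/gquot_lift1E/geq_scale. Qed.
Lemma qmulE t u : qmul (gclass t) (gclass u) = gclass (gdot t u).
Proof. exact/gquot_lift2E/geq_dot. Qed.
Lemma qcircE t u : qcirc (gclass t) (gclass u) = gclass (gcirc t u).
Proof. exact/gquot_lift2E/geq_circ. Qed.

HB.instance Definition _ := gen_eqMixin gquot.
HB.instance Definition _ := gen_choiceMixin gquot.

Lemma qaddA : associative qadd.
Proof.
elim/gquot_ind => t; elim/gquot_ind => u; elim/gquot_ind => v.
by rewrite !qaddE; apply/eq_gclass/geq_sym/geq_addA.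
Qed.

Lemma qaddC : commutative qadd.
Proof.
by elim/gquot_ind => t; elim/gquot_ind => u; rewrite !qaddE; apply/eq_gclass/geq_addC.
Qed.

Lemma qadd0r : left_id (gclass (gzero k X)) qadd.
Proof.
elim/gquot_ind => t; rewrite qaddE; apply: eq_gclass.
exact: geq_trans (geq_addC _ _ _) (geq_add0 _ _).
Qed.

Lemma qaddNr : left_inverse (gclass (gzero k X)) (qscale (-1)) qadd.
Proof.
elim/gquot_ind => t; rewrite qscaleE qaddE; apply: eq_gclass.
apply: geq_trans (geq_add (geq_refl _ _) (geq_sym (geq_scale1 _ t))) _.
apply: geq_trans (geq_sym (geq_scaleDl _ _ _ _)) _.
by rewrite addNr; apply: geq_scale0.
Qed.

HB.instance Definition _ := GRing.isZmodule.Build gquot qaddA qaddC qadd0r qaddNr.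

Lemma qmulA : associative qmul.
Proof.
elim/gquot_ind => t; elim/gquot_ind => u; elim/gquot_ind => v.
by rewrite !qmulE; apply/eq_gclass/geq_sym/geq_dotA.
Qed.

Lemma qmulC : commutative qmul.
Proof.
by elim/gquot_ind => t; elim/gquot_ind => u; rewrite !qmulE; apply/eq_gclass/geq_dotC.
Qed.

Lemma qmul1r : left_id (gclass (gunit k X)) qmul.
Proof. by elim/gquot_ind => t; rewrite qmulE; apply/eq_gclass/geq_dot1. Qed.

Lemma qmulDl : left_distributive qmul qadd.
Proof.
elim/gquot_ind => t; elim/gquot_ind => u; elim/gquot_ind => v.
by rewrite !qaddE !qmulE qaddE; apply/eq_gclass/geq_dotDl.
Qed.

HB.instance Definition _ := GRing.Zmodule_isComPzRing.Build gquot qmulA qmulC qmul1r qmulDl.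

Lemma qscaleA a b v : qscale a (qscale b v) = qscale (a * b) v.
Proof.
by elim/gquot_ind: v => t; rewrite !qscaleE; apply/eq_gclass/geq_sym/geq_scaleA.
Qed.

Lemma qscale1 : left_id 1 qscale.
Proof. by elim/gquot_ind => t; rewrite qscaleE; apply/eq_gclass/geq_scale1. Qed.

Lemma qscaleDr : right_distributive qscale qadd.
Proof.
move=> c; elim/gquot_ind => t; elim/gquot_ind => u.
by rewrite !qaddE !qscaleE qaddE; apply/eq_gclass/geq_scaleDr.
Qed.

Lemma qscaleDl v : {morph qscale^~ v : a b / a + b >-> qadd a b}.
Proof.
by elim/gquot_ind: v => t a b; rewrite !qscaleE qaddE; apply/eq_gclass/geq_scaleDl.
Qed.

HB.instance Definition _ :=
  GRing.Zmodule_isLmodule.Build k gquot qscaleA qscale1 qscaleDr qscaleDl.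

Lemma gclassD t u : gclass (gadd t u) = gclass t + gclass u.
Proof. by rewrite -qaddE. Qed.

Lemma gclassZ c t : gclass (gscale c t) = c *: gclass t.
Proof. by rewrite -qscaleE. Qed.

Lemma gclassM t u : gclass (gdot t u) = gclass t * gclass u.
Proof. by rewrite -qmulE. Qed.

Lemma qcircDr x : {morph qcirc x : y z / y + z}.
Proof.
elim/gquot_ind: x => t; elim/gquot_ind => u; elim/gquot_ind => v.
by rewrite -!gclassD !qcircE -gclassD; apply/eq_gclass/geq_circDr.
Qed.

Lemma qcircZr x c y : qcirc x (c *: y) = c *: qcirc x y.
Proof.
elim/gquot_ind: x => t; elim/gquot_ind: y => u.
by rewrite -gclassZ !qcircE -gclassZ; apply/eq_gclass/geq_circZr.
Qed.

Lemma qcirc_mull x y z : qcirc (x * y) z = x * qcirc y z.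
Proof.
elim/gquot_ind: x => t; elim/gquot_ind: y => u; elim/gquot_ind: z => v.
by rewrite -gclassM !qcircE -gclassM; apply/eq_gclass/geq_comp1.
Qed.

Lemma qcirc_exchange x y z :
  qcirc x y * z - qcirc x (y * z) = qcirc y x * z - qcirc y (x * z).
Proof.
elim/gquot_ind: x => t; elim/gquot_ind: y => u; elim/gquot_ind: z => v.
rewrite -!gclassM !qcircE -!gclassM -!scaleN1r -!gclassZ -!gclassD.
exact/eq_gclass/geq_comp2.
Qed.

Lemma qscalerAl c (x y : gquot) : c *: x * y = c *: (x * y).
Proof.
elim/gquot_ind: x => t; elim/gquot_ind: y => u.
by rewrite -gclassZ -!gclassM -gclassZ; apply/eq_gclass/geq_dotZl.
Qed.

Local Notation qder := (gdn_der qcirc).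

Lemma qderZ c y : qder (c *: y) = c *: qder y.
Proof. by rewrite /gdn_der qcircZr qscalerAl scalerBr. Qed.

Definition qconst (c : k) : gquot := c *: (1 : gquot).

Lemma qconst_mul c x : qconst c * x = c *: x.
Proof. by rewrite qscalerAl mul1r. Qed.

Lemma qconst_is_zmod_morphism : zmod_morphism qconst.
Proof. by move=> a b; rewrite /qconst scalerBl. Qed.

Lemma qconst_is_monoid_morphism : monoid_morphism qconst.
Proof. by split=> [|a b]; rewrite /qconst ?scale1r // qconst_mul scalerA. Qed.

HB.instance Definition _ := GRing.isZmodMorphism.Build k gquot qconst
  qconst_is_zmod_morphism.
HB.instance Definition _ := GRing.isMonoidMorphism.Build k gquot qconst
  qconst_is_monoid_morphism.

Lemma qder_const c : qder (qconst c) = 0.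
Proof. by rewrite qderZ /gdn_der mul1r subrr scaler0. Qed.

Local Notation leval_gquot :=
  (leval qder (qcirc 1 1) qconst (fun a => gclass (gvar k a))).

Lemma leval_phiGC g : laurent_eq (leval_gquot (phiGC g)) [:: (0, gclass g)].
Proof.
elim: g => [a | | | t IHt u IHu | c t IHt | t IHt u IHu | t IHt u IHu] /=.
- exact: laurent_eq_refl.
- exact: laurent_eq_refl.
- exact/laurent_eq_sym/laurent_eq_mono0.
- apply: laurent_eq_trans (laurent_eq_cat IHt IHu) _.
  by rewrite gclassD; apply: laurent_eq_monoD.
- apply: laurent_eq_trans (laurent_eq_scale _ IHt) _.
  by rewrite /lscale /= qconst_mul gclassZ; apply: laurent_eq_refl.
- apply: laurent_eq_trans (laurent_eq_mul IHt IHu) _.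
  by rewrite /lmul /= addr0 gclassM; apply: laurent_eq_refl.
- apply: laurent_eq_trans
    (laurent_eq_star IHt (laurent_eq_der _ (gdn_derD qcircDr) IHu)) _.
  rewrite /lstar /lder /= -qcircE (circE qcirc_mull (gclass t)).
  have -> : 0 + (0 - 1) + 1 = 0 :> int by [].
  by rewrite add0r mulr1z mul1r; apply: laurent_eq_refl.
Qed.

Lemma leval_phi_img r : phi_img S r -> laurent_eq (leval_gquot r) [::].
Proof.
case=> s Ss ->; apply: laurent_eq_trans (leval_phiGC s) _.
by rewrite (eq_gclass (geq_rel Ss)); apply: laurent_eq_mono0.
Qed.

End Quotient.

Theorem mainTheorem2 (k : fieldType) (X : Type) (S : gterm k X -> Prop)
  (t u : gterm k X) :
  spc_cong (phi_img S) (phiGC t) (phiGC u) -> gdn_cong S t u.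
Proof.
move=> tu; apply/gclass_inj/(@laurent_eq_mono_inj _ 0).
have model_tu := leval_cong (gdn_derD (qcircDr (S := S)))
  (gdn_derM (qcirc_mull (S := S)) (qcirc_exchange (S := S)))
  (qder_const S) (leval_phi_img (S := S)) tu.
exact: laurent_eq_trans (laurent_eq_sym (leval_phiGC (S := S) t))
  (laurent_eq_trans model_tu (leval_phiGC (S := S) u)).
Qed.
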